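(* Let $S$ be a numerical semigroup. If $S$ is telescopic, then $\mathrm{Ap}(S)$ is $\beta$-rectangular. The converse fails: $S=\langle 4,5,6\rangle$ has $\alpha$-rectangular (hence $\beta$-rectangular) Apéry set but is not telescopic.
   Context: A numerical semigroup is a submonoid $S$ of $(\mathbb N,+)$ with finite complement in $\mathbb N$; $g_1<\dots<g_\nu$ is its minimal system of generators, $m=g_1$, and $\mathrm{Ap}(S)=\{s\in S: s-m\notin S\}$. A representation of $s\in S$ is an expression $s=\sum_{i=1}^\nu\lambda_ig_i$, $\lambda_i\in\mathbb N$; $\mathrm{ord}(s)$ is the maximum of $\sum\lambda_i$ over all representations. For $i=2,\dots,\nu$: $\tau_i=\min\{h\in\mathbb N: hg_i\in\langle g_1,\dots,g_{i-1}\rangle\}-1$; $\alpha_i=\max\{h\in\mathbb N: hg_i\in\mathrm{Ap}(S)\}$; $\beta_i=\max\{h\in\mathbb N: hg_i\in\mathrm{Ap}(S),\ \mathrm{ord}(hg_i)=h\}$. $S$ is telescopic if $\mathrm{Ap}(S)=\{\sum_{i=2}^\nu\lambda_ig_i: 0\le\lambda_i\le\tau_i\}$. For $\delta\in\{\alpha,\beta\}$, $\mathrm{Ap}(S)$ is $\delta$-rectangular if $\mathrm{Ap}(S)=\{\sum_{i=2}^\nu\lambda_ig_i: 0\le\lambda_i\le\delta_i\}$. *)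

From mathcomp Require Import all_boot.
Set Implicit Arguments. Unset Strict Implicit. Unset Printing Implicit Defensive.

Definition numerical_semigroup (S : nat -> Prop) : Prop :=
  [/\ S 0, (forall a b, S a -> S b -> S (a + b)) & exists N, forall n, N <= n -> S n].

Definition gen (g : seq nat) (s : nat) : Prop :=
  exists lam : nat -> nat, s = \sum_(i < size g) lam i * nth 0 g i.

(* g = [:: g_1; ...; g_nu] (0-indexed in Rocq) is the minimal system of generators of S:
   strictly increasing, generates S, and no generator lies in the monoid generated by
   the other generators. *)
Definition min_gens (S : nat -> Prop) (g : seq nat) : Prop :=
  [/\ sorted ltn g,
      (forall s, S s <-> gen g s) &
      forall i, i < size g -> ~ gen (take i g ++ drop i.+1 g) (nth 0 g i)].

Definition mult (g : seq nat) : nat := nth 0 g 0.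

Definition Ap (S : nat -> Prop) (g : seq nat) (s : nat) : Prop :=
  S s /\ ~ (mult g <= s /\ S (s - mult g)).

Definition is_rep (g : seq nat) (lam : nat -> nat) (s : nat) : Prop :=
  s = \sum_(i < size g) lam i * nth 0 g i.
Definition rep_len (g : seq nat) (lam : nat -> nat) : nat := \sum_(i < size g) lam i.

Definition is_ord (g : seq nat) (s h : nat) : Prop :=
  (exists lam, is_rep g lam s /\ rep_len g lam = h) /\
  (forall lam, is_rep g lam s -> rep_len g lam <= h).

(* tau_i = t, with i the 0-based index of g_i (1 <= i < size g):
   t.+1 = min {h >= 1 : h g_i in <g_1,...,g_(i-1)>} *)
Definition is_tau (g : seq nat) (i t : nat) : Prop :=
  gen (take i g) (t.+1 * nth 0 g i) /\
  (forall h, 0 < h -> gen (take i g) (h * nth 0 g i) -> t.+1 <= h).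

Definition is_alpha (S : nat -> Prop) (g : seq nat) (i a : nat) : Prop :=
  Ap S g (a * nth 0 g i) /\ (forall h, Ap S g (h * nth 0 g i) -> h <= a).

Definition is_beta (S : nat -> Prop) (g : seq nat) (i b : nat) : Prop :=
  (Ap S g (b * nth 0 g i) /\ is_ord g (b * nth 0 g i) b) /\
  (forall h, Ap S g (h * nth 0 g i) -> is_ord g (h * nth 0 g i) h -> h <= b).

Definition box (g : seq nat) (d : nat -> nat) (s : nat) : Prop :=
  exists lam : nat -> nat,
    (forall i, 0 < i < size g -> lam i <= d i) /\
    s = \sum_(1 <= i < size g) lam i * nth 0 g i.

Definition Ap_equals_box (S : nat -> Prop) (g : seq nat) (d : nat -> nat) : Prop :=
  forall s, Ap S g s <-> box g d s.

Definition telescopic (S : nat -> Prop) (g : seq nat) : Prop :=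
  exists tau : nat -> nat,
    (forall i, 0 < i < size g -> is_tau g i (tau i)) /\ Ap_equals_box S g tau.

Definition alpha_rectangular (S : nat -> Prop) (g : seq nat) : Prop :=
  exists alpha : nat -> nat,
    (forall i, 0 < i < size g -> is_alpha S g i (alpha i)) /\ Ap_equals_box S g alpha.

Definition beta_rectangular (S : nat -> Prop) (g : seq nat) : Prop :=
  exists beta : nat -> nat,
    (forall i, 0 < i < size g -> is_beta S g i (beta i)) /\ Ap_equals_box S g beta.

From mathcomp Require Import all_boot zify.
Set Implicit Arguments. Unset Strict Implicit. Unset Printing Implicit Defensive.

(* Let g_0 = m < g_1 < ... be the minimal generators and tau_k the telescopic
   bounds, so that Ap(S) is the box {sum_(k >= 1) l_k g_k : l_k <= tau_k}.
   We show beta_k = tau_k.  The key tool is a normal form: rewriting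
   (tau_k + 1) g_k as a combination of smaller generators never shortens a
   representation, so every representation of x becomes one of the shape
   q m + (box element) that is at least as long.  Box elements are Apery
   elements, and distinct Apery elements are incongruent modulo m; from this
   the box coordinates of an element are unique.  Hence any representation of
   tau_k g_k normalizes to tau_k g_k itself, so ord(tau_k g_k) = tau_k, while
   for h > tau_k the substitution above yields a representation of h g_k that
   is longer than h.  The example is settled by explicit computation:
   Ap(<4,5,6>) = {0,5,6,11} is the box with all bounds 1, but tau_1 = 3. *)

Definition single (i c : nat) : nat -> nat := fun j => if j == i then c else 0.

Lemma sum_single a b i c (F : nat -> nat) : a <= i < b ->
  \sum_(a <= j < b) single i c j * F j = c * F i.
Proof.
move=> Hi; rewrite (eq_bigr (fun j => if j == i then c * F j else 0)); last first.
  by move=> j _; rewrite /single; case: eqP.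
by rewrite -big_mkcond big_nat1_eq Hi.
Qed.

Lemma sum_piecewise a i b (F G : nat -> nat) : a <= i <= b ->
  \sum_(a <= j < b) (if j < i then F j else G j) =
  \sum_(a <= j < i) F j + \sum_(i <= j < b) G j.
Proof.
case/andP=> Hai Hib; rewrite (big_cat_nat Hai Hib) /=; congr (_ + _).
- by apply: eq_big_nat => j /andP[_ ->].
- by apply: eq_big_nat => j /andP[Hj _]; rewrite ltnNge Hj.
Qed.

Definition len (lam : nat -> nat) (a b : nat) : nat := \sum_(a <= j < b) lam j.

Lemma eq_len (lam mu : nat -> nat) a b :
  (forall j, a <= j < b -> lam j = mu j) -> len lam a b = len mu a b.
Proof. exact: eq_big_nat. Qed.

Lemma len_single a b i c : a <= i < b -> len (single i c) a b = c.
Proof.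
move=> Hi; rewrite -[RHS]muln1 -(sum_single c (fun _ => 1) Hi).
by apply: eq_bigr => j _; rewrite muln1.
Qed.

Section Combinations.
Variable g : seq nat.

Definition lin (lam : nat -> nat) (a b : nat) : nat := \sum_(a <= j < b) lam j * nth 0 g j.

Lemma eq_lin (lam mu : nat -> nat) a b :
  (forall j, a <= j < b -> lam j = mu j) -> lin lam a b = lin mu a b.
Proof. by move=> E; apply: eq_big_nat => j /E ->. Qed.

Lemma lin_piecewise (F G : nat -> nat) a i b : a <= i <= b ->
  lin (fun j => if j < i then F j else G j) a b = lin F a i + lin G i b.
Proof. by move=> Hi; rewrite /lin -sum_piecewise //; apply: eq_bigr => j _; case: ifP. Qed.

Definition gen_below (k x : nat) : Prop := exists lam, x = lin lam 0 k.

Lemma lin_combine (lam mu : nat -> nat) c a b :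
  lin (fun j => lam j + c * mu j) a b = lin lam a b + c * lin mu a b.
Proof.
rewrite /lin big_distrr -big_split /=.
by apply: eq_bigr => j _; rewrite mulnDl mulnA.
Qed.

Lemma len_combine (lam mu : nat -> nat) c a b :
  len (fun j => lam j + c * mu j) a b = len lam a b + c * len mu a b.
Proof. by rewrite /len big_distrr -big_split. Qed.

Lemma lin_head (lam : nat -> nat) k : 0 < k -> lin lam 0 k = lam 0 * mult g + lin lam 1 k.
Proof. by move=> Hk; rewrite /lin big_ltn. Qed.

Lemma len_head (lam : nat -> nat) k : 0 < k -> len lam 0 k = lam 0 + len lam 1 k.
Proof. by move=> Hk; rewrite /len big_ltn. Qed.

Lemma is_repE (lam : nat -> nat) s : is_rep g lam s <-> s = lin lam 0 (size g).
Proof. by rewrite /is_rep /lin big_mkord. Qed.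

Lemma rep_lenE (lam : nat -> nat) : rep_len g lam = len lam 0 (size g).
Proof. by rewrite /rep_len /len big_mkord. Qed.

Lemma gen_take k x : k <= size g -> gen (take k g) x <-> gen_below k x.
Proof.
move=> Hk; have E (lam : nat -> nat) :
    \sum_(i < size (take k g)) lam i * nth 0 (take k g) i = lin lam 0 k.
  by rewrite size_takel // /lin big_mkord; apply: eq_bigr => j _; rewrite nth_take.
by split=> -[lam ->]; exists lam; rewrite E.
Qed.

Lemma gen_below_size x : gen g x <-> gen_below (size g) x.
Proof. by rewrite -gen_take // take_size. Qed.

Lemma gen_below_add k x y : gen_below k x -> gen_below k y -> gen_below k (x + y).
Proof.
case=> [lam ->] [mu ->]; exists (fun j => lam j + 1 * mu j).
by rewrite lin_combine mul1n.
Qed.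

Lemma gen_below_scale k c x : gen_below k x -> gen_below k (c * x).
Proof.
case=> lam ->; exists (fun j => c * lam j).
by rewrite /lin big_distrr; apply: eq_bigr => j _ /=; rewrite mulnA.
Qed.

Lemma gen_below_single k j c : j < k -> gen_below k (c * nth 0 g j).
Proof. by move=> Hj; exists (single j c); rewrite /lin sum_single. Qed.

Lemma gen_below_tail (lam : nat -> nat) k : gen_below k (lin lam 1 k).
Proof.
case: k => [|k]; first by exists lam; rewrite /lin !big_geq.
exists (fun j => if j < 1 then 0 else lam j).
by rewrite lin_piecewise // /lin big_nat1 mul0n.
Qed.

End Combinations.

Section Telescopic.
Variables (S : nat -> Prop) (g : seq nat) (tau : nat -> nat).
Hypothesis g_sorted : sorted ltn g.
Hypothesis S_gen : forall s, S s <-> gen g s.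
Hypothesis g_min : forall i, i < size g -> ~ gen (take i g ++ drop i.+1 g) (nth 0 g i).
Hypothesis tau_spec : forall i, 0 < i < size g -> is_tau g i (tau i).
Hypothesis Ap_box : Ap_equals_box S g tau.

Lemma gen_increasing j k : j < k -> k < size g -> nth 0 g j < nth 0 g k.
Proof.
move=> Hjk Hk; apply: (sorted_ltn_nth ltn_trans 0 g_sorted) => //.
by rewrite inE (ltn_trans Hjk).
Qed.

Lemma gen_pos j : j < size g -> 0 < nth 0 g j.
Proof.
move=> Hj; have Hm : 0 < nth 0 g 0.
  rewrite lt0n; apply/negP => /eqP E; apply: (g_min (leq_ltn_trans (leq0n j) Hj)).
  by rewrite E; exists (fun _ => 0); rewrite big1.
case: j Hj => // j Hj; exact: leq_trans Hm (ltnW (gen_increasing (ltn0Sn j) Hj)).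
Qed.

Lemma S_below x : S x <-> gen_below g (size g) x.
Proof. by rewrite S_gen gen_below_size. Qed.

Lemma Ap_of_box (mu : nat -> nat) k : k <= size g ->
  (forall j, 0 < j < k -> mu j <= tau j) -> Ap S g (lin g mu 1 k).
Proof.
move=> Hk Hmu; case: k Hk Hmu => [|k] Hk Hmu.
  by apply/Ap_box; exists (fun _ => 0); rewrite /lin big_geq // big1.
apply/Ap_box; exists (fun j => if j < k.+1 then mu j else 0); split.
- by move=> j /andP[Hj0 Hj]; case: ifP => // Hjk; apply: Hmu; rewrite Hj0.
- rewrite -/(lin g (fun j => if j < k.+1 then mu j else 0) 1 (size g)).
  by rewrite lin_piecewise // [X in _ + X]/lin big1 ?addn0.
Qed.

Lemma Ap_single k t : 0 < k < size g -> t <= tau k -> Ap S g (t * nth 0 g k).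
Proof.
case/andP=> Hk0 Hk Ht.
rewrite -(sum_single t (nth 0 g) (_ : 1 <= k < k.+1)); last by rewrite Hk0 ltnSn.
by apply: Ap_of_box => // j _; rewrite /single; case: eqP => // ->.
Qed.

Lemma Ap_size x : Ap S g x -> 0 < size g.
Proof.
case=> Sx Hx; rewrite lt0n; apply/negP => /eqP/size0nil Eg.
by apply: Hx; rewrite /mult Eg subn0.
Qed.

Lemma Ap_no_shift x q b : Ap S g x -> S b -> x = q * mult g + b -> q = 0.
Proof.
move=> Apx Sb Ex; have Hn := Ap_size Apx; case: Apx => _ Hx.
case: q Ex => // q Ex; case: Hx; split; first by lia.
have -> : x - mult g = q * mult g + b by lia.
by apply/S_below/gen_below_add; [exact: gen_below_single | exact/S_below].
Qed.

Lemma Ap_congr_eq u v : Ap S g u -> Ap S g v -> u = v %[mod mult g] -> u = v.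
Proof.
wlog le_uv : u v / u <= v => [hwlog Apu Apv E|Apu Apv E].
  by case: (leqP u v) => [|/ltnW] H; [exact: hwlog | apply/esym/hwlog].
have /dvdnP[d Ed] : mult g %| v - u by rewrite -eqn_mod_dvd // E.
have Ev : v = d * mult g + u by lia.
have Su : S u by case: Apu.
by rewrite Ev (Ap_no_shift Apv Su Ev).
Qed.

(* (tau_k + 1) g_k is a combination of smaller generators; as each of them is
   smaller than g_k, that combination is strictly longer than tau_k + 1. *)
Lemma tau_cover k : 0 < k < size g ->
  exists cl, (tau k).+1 * nth 0 g k = lin g cl 0 k /\ (tau k).+1 < len cl 0 k.
Proof.
move=> Hk'; have /andP[Hk0 Hk] := Hk'.
have [/(gen_take _ (ltnW Hk))[cl Ecl] _] := tau_spec Hk'.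
exists cl; split => //.
have Hlin : lin g cl 0 k <= len cl 0 k * (nth 0 g k).-1.
  rewrite /lin /len big_distrl /= big_seq [X in _ <= X]big_seq; apply: leq_sum => j.
  rewrite mem_index_iota => /andP[_ Hj]; rewrite leq_mul2l -ltnS prednK ?gen_pos //.
  by rewrite gen_increasing ?orbT.
have := gen_pos Hk; rewrite -Ecl in Hlin; nia.
Qed.

Lemma tau_minimal k t : 0 < k < size g -> 0 < t <= tau k -> ~ gen_below g k (t * nth 0 g k).
Proof.
move=> Hk' /andP[Ht0 Ht] Hgen; have /andP[_ Hk] := Hk'.
have [_ Hmin] := tau_spec Hk'.
by move: (Hmin t Ht0 (proj2 (gen_take _ (ltnW Hk)) Hgen)); rewrite ltnNge Ht.
Qed.

(* Write lam_(k-1) = p (tau + 1) + r and substitute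
   p (tau + 1) g_(k-1) by tau_cover. *)
Lemma normal_form k (lam : nat -> nat) : k <= size g ->
  exists mu, [/\ lin g lam 0 k = lin g mu 0 k,
                 forall j, 0 < j < k -> mu j <= tau j &
                 len lam 0 k <= len mu 0 k].
Proof.
elim: k lam => [|k IH] lam Hk; first by exists lam; split=> // j; rewrite ltn0 andbF.
case: (posnP k) => [k0|kpos].
  by exists lam; split=> // j; lia.
have Hk' : 0 < k < size g by rewrite kpos.
have [cl [Ecl Lcl]] := tau_cover Hk'.
have Hdiv := divn_eq (lam k) (tau k).+1.
set p := lam k %/ (tau k).+1 in Hdiv; set r := lam k %% (tau k).+1 in Hdiv.
have [mu [Emu Bmu Lmu]] := IH (fun j => lam j + p * cl j) (ltnW Hk).
have Hr : r <= tau k by rewrite -ltnS ltn_mod.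
exists (fun j => if j < k then mu j else r); split.
- rewrite /lin !big_nat_recr //= ltnn -!/(lin g _ 0 k).
  rewrite [in RHS](@eq_lin _ _ mu); last by move=> j /andP[_ ->].
  rewrite -Emu lin_combine -Ecl Hdiv; nia.
- move=> j /andP[Hj0 Hj]; case: ltnP => [Hjk|Hkj]; first by apply: Bmu; rewrite Hj0.
  by have -> : j = k by lia.
- rewrite /len !big_nat_recr //= ltnn -!/(len _ 0 k).
  rewrite (@eq_len (fun j => if j < k then mu j else r) mu); last by move=> j /andP[_ ->].
  rewrite len_combine in Lmu; nia.
Qed.

(* t g_k with 0 < t <= tau_k is not congruent modulo m to any element of
   <g_0, ..., g_(k-1)>: normalize that element to q m + b with b a box
   element; both b and t g_k are Apery elements, so t g_k = b, against
   tau_minimal. *)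
Lemma no_lower_congruence k t x : 0 < k < size g -> 0 < t <= tau k ->
  gen_below g k x -> t * nth 0 g k = x %[mod mult g] -> False.
Proof.
move=> Hk' Ht [lam ->] Emod; have /andP[Hk0 Hk] := Hk'.
have [mu [Emu Bmu _]] := normal_form lam (ltnW Hk).
have Apt : Ap S g (t * nth 0 g k) by apply: Ap_single => //; case/andP: Ht.
have Apb := Ap_of_box (ltnW Hk) Bmu.
apply: (tau_minimal Hk' Ht); rewrite (Ap_congr_eq Apt Apb); first exact: gen_below_tail.
by rewrite Emod Emu lin_head // modnMDl.
Qed.

(* Hence in x + a g_k = y + b g_k with x, y in <g_0, ..., g_(k-1)> and
   a, b <= tau_k the top coefficients agree: otherwise (b - a) g_k would be
   congruent to x + (m - 1) y. *)
Lemma top_coeff_eq k a b x y : 0 < k < size g -> a <= tau k -> b <= tau k ->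
  gen_below g k x -> gen_below g k y ->
  x + a * nth 0 g k = y + b * nth 0 g k -> a = b.
Proof.
move=> Hk' Ha Hb; wlog le_ab : a b x y Ha Hb / a <= b => [hwlog Hx Hy E|Hx Hy E].
  case: (leqP a b) => [|/ltnW] H; first exact: hwlog Ha Hb H Hx Hy E.
  exact/esym/(hwlog b a y x Hb Ha H Hy Hx).
case: (ltnP a b) => [lt_ab|]; last by move=> le_ba; apply/eqP; rewrite eqn_leq le_ab.
exfalso; apply: (no_lower_congruence (x := x + (mult g).-1 * y) Hk' (_ : 0 < b - a <= tau k)).
- lia.
- exact: gen_below_add Hx (gen_below_scale (mult g).-1 Hy).
- have Hm : 0 < mult g by apply: gen_pos; case/andP: Hk'; lia.
  rewrite -(modnMDl y) mulnC; congr (_ %% _); nia.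
Qed.

Lemma box_unique k (mu nu : nat -> nat) : k <= size g ->
  (forall j, 0 < j < k -> mu j <= tau j) -> (forall j, 0 < j < k -> nu j <= tau j) ->
  lin g mu 1 k = lin g nu 1 k -> forall j, 0 < j < k -> mu j = nu j.
Proof.
elim: k => [|k IH] Hk Bmu Bnu E j Hj; first by lia.
case: (posnP k) => [k0|kpos]; first by lia.
have Hk' : 0 < k < size g by rewrite kpos.
have Hkk : 0 < k < k.+1 by rewrite kpos ltnSn.
move: E; rewrite /lin !big_nat_recr //= -!/(lin g _ 1 k) => E.
have top : mu k = nu k.
  exact: top_coeff_eq Hk' (Bmu _ Hkk) (Bnu _ Hkk) (gen_below_tail _ _ _)
    (gen_below_tail _ _ _) E.
have [ltjk|lekj] := ltnP j k; last by have -> : j = k by lia.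
apply: (IH (ltnW Hk)); last by lia.
- by move=> i Hi; apply: Bmu; lia.
- by move=> i Hi; apply: Bnu; lia.
- by move: E; rewrite top => /addIn.
Qed.

(* ord(tau_i g_i) = tau_i: a representation normalizes to a box element plus
   q m, where q = 0 because tau_i g_i is an Apery element, and the box part is
   then tau_i e_i by uniqueness. *)
Lemma ord_tau_multiple i : 0 < i < size g -> is_ord g (tau i * nth 0 g i) (tau i).
Proof.
move=> Hi'; have /andP[Hi0 Hi] := Hi'; have Hin : 0 <= i < size g by rewrite Hi.
have Hn : 0 < size g by lia.
have Bsingle j : 0 < j < size g -> single i (tau i) j <= tau j.
  by rewrite /single; case: eqP => // ->.
split.
  exists (single i (tau i)); rewrite is_repE rep_lenE len_single //.
  by rewrite /lin sum_single.
move=> lam; rewrite is_repE rep_lenE => E.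
have [mu [Emu Bmu Lmu]] := normal_form lam (leqnn _).
apply: (leq_trans Lmu).
have mu0 : mu 0 = 0.
  apply: (Ap_no_shift (Ap_single Hi' (leqnn _)) (b := lin g mu 1 (size g))).
    by case: (Ap_of_box (leqnn _) Bmu).
  by rewrite E Emu lin_head.
have Etail : lin g mu 1 (size g) = lin g (single i (tau i)) 1 (size g).
  by rewrite {2}/lin sum_single ?Hi0 // E Emu lin_head // mu0.
rewrite len_head // mu0 (eq_len (box_unique (leqnn _) Bmu Bsingle Etail)).
by rewrite len_single ?Hi0.
Qed.

(* If ord(h g_i) = h then h <= tau_i: for h > tau_i, substituting
   (tau_i + 1) g_i by tau_cover gives a representation longer than h. *)
Lemma beta_le_tau i h : 0 < i < size g -> is_ord g (h * nth 0 g i) h -> h <= tau i.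
Proof.
move=> Hi' [_ Hord]; have /andP[Hi0 Hi] := Hi'.
rewrite leqNgt; apply/negP => Hlt.
have [cl [Ecl Lcl]] := tau_cover Hi'.
pose lam j := if j < i then cl j else single i (h - (tau i).+1) j.
have Hsplit : 0 <= i <= size g by rewrite (ltnW Hi).
have Hii : i <= i < size g by rewrite leqnn.
have Erep : h * nth 0 g i = lin g lam 0 (size g).
  rewrite lin_piecewise // -Ecl /lin sum_single // -mulnDl; congr (_ * _); lia.
have Elen : len lam 0 (size g) = len cl 0 i + (h - (tau i).+1).
  by rewrite /len sum_piecewise // -/(len (single i (h - (tau i).+1)) i (size g)) len_single.
by have := Hord lam; rewrite is_repE rep_lenE Elen => /(_ Erep); lia.
Qed.

End Telescopic.

Theorem telescopic_beta_rectangular S g : numerical_semigroup S -> min_gens S g ->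
  telescopic S g -> beta_rectangular S g.
Proof.
move=> _ [g_sorted S_gen g_min] [tau [tau_spec Ap_box]].
exists tau; split => // i Hi; split; last by move=> h _; exact: beta_le_tau.
split; first exact: Ap_single.
exact: ord_tau_multiple.
Qed.

Local Notation g456 := [:: 4; 5; 6].
Local Notation S456 := (gen g456).

Lemma gen456E s : S456 s <-> exists a b c, s = a * 4 + b * 5 + c * 6.
Proof.
split.
- case=> lam ->; exists (lam 0), (lam 1), (lam 2).
  by rewrite !big_ord_recl big_ord0 addn0 addnA.
- case=> a [b [c ->]]; exists (nth 0 [:: a; b; c]).
  by rewrite !big_ord_recl big_ord0 addn0 addnA.
Qed.

Lemma box456E d s : box g456 d s <->
  exists l1 l2, [/\ l1 <= d 1, l2 <= d 2 & s = l1 * 5 + l2 * 6].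
Proof.
rewrite /box; split.
- case=> lam [H ->]; exists (lam 1), (lam 2).
  by rewrite big_ltn // big_ltn // big_geq // addn0; split=> //; apply: H.
- case=> l1 [l2 [H1 H2 ->]]; exists (nth 0 [:: 0; l1; l2]).
  rewrite big_ltn // big_ltn // big_geq // addn0; split=> // i /andP[].
  by case: i => [|[|[|i]]].
Qed.

Lemma Ap456E s : Ap S456 g456 s <->
  exists l1 l2, [/\ l1 <= 1, l2 <= 1 & s = l1 * 5 + l2 * 6].
Proof.
rewrite /Ap /mult !gen456E /=; split.
- case=> [[a [b [c Hs]]] H].
  have Ha : a = 0.
    case: a Hs => // a Hs; case: H; split; first by lia.
    by exists a, b, c; lia.
  have Hb : b <= 1.
    case: b Hs => [|[|b]] Hs //; case: H; split; first by lia.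
    by exists a, b, c.+1; lia.
  have Hc : c <= 1.
    case: c Hs => [|[|c]] Hs //; case: H; split; first by lia.
    by exists a.+2, b, c; lia.
  by exists b, c; split=> //; lia.
- case=> l1 [l2 [H1 H2 ->]]; split; first by exists 0, l1, l2; lia.
  by case=> H4 [a [b [c E]]]; lia.
Qed.

Lemma S456_numerical : numerical_semigroup S456.
Proof.
split; first by apply/gen456E; exists 0, 0, 0.
- move=> a b; rewrite !gen456E => -[a1 [b1 [c1 ->]]] [a2 [b2 [c2 ->]]].
  by exists (a1 + a2), (b1 + b2), (c1 + c2); lia.
- exists 8 => n Hn; apply/gen456E.
  have := divn_eq n 4; have := ltn_pmod n (isT : 0 < 4).
  move: (n %/ 4) (n %% 4) => q [|[|[|[|r]]]] // _ En.
  + by exists q, 0, 0; lia.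
  + by exists (q - 1), 1, 0; lia.
  + by exists (q - 1), 0, 1; lia.
  + by exists (q - 2), 1, 1; lia.
Qed.

Lemma S456_min_gens : min_gens S456 g456.
Proof.
split=> // -[|[|[|i]]] // _ [lam];
  by rewrite !big_ord_recl big_ord0 /=; lia.
Qed.

Lemma Ap456_box : Ap_equals_box S456 g456 (fun _ => 1).
Proof. by move=> s; rewrite Ap456E box456E. Qed.

Lemma Ap456_multiple i h : 0 < i < 3 -> Ap S456 g456 (h * nth 0 g456 i) <-> h <= 1.
Proof.
move=> Hi; rewrite Ap456E; split.
- by case=> l1 [l2 [H1 H2]]; case: i Hi => [|[|[|i]]] //= _; lia.
- case: h => [|[|h]] Hh //; first by exists 0, 0; split.
  by case: i Hi => [|[|[|i]]] // _; [exists 1, 0 | exists 0, 1]; split.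
Qed.

Lemma ord456_gen i : 0 < i < 3 -> is_ord g456 (1 * nth 0 g456 i) 1.
Proof.
move=> Hi; have Hi3 : 0 <= i < size g456 by case/andP: Hi => _ ->.
split.
- exists (single i 1); rewrite is_repE rep_lenE len_single //; split=> //.
  by rewrite /lin sum_single.
- move=> lam; rewrite /is_rep /rep_len !big_ord_recl !big_ord0 /bump /=.
  by case: i Hi {Hi3} => [|[|[|i]]] //= _; lia.
Qed.

Lemma S456_alpha_rectangular : alpha_rectangular S456 g456.
Proof.
exists (fun _ => 1); split; last exact: Ap456_box.
by move=> i Hi; split=> [|h /(Ap456_multiple _ Hi)] //; apply/(Ap456_multiple _ Hi).
Qed.

Lemma S456_beta_rectangular : beta_rectangular S456 g456.
Proof.
exists (fun _ => 1); split; last exact: Ap456_box.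
move=> i Hi; split=> [|h /(Ap456_multiple _ Hi)] //.
by split; [apply/(Ap456_multiple _ Hi) | apply: ord456_gen].
Qed.

(* tau_1 = 3 since 4 * 5 = 5 * 4, but then the box contains 3 * 5 = 15 = 11 + 4,
   which is not an Apery element. *)
Lemma S456_not_telescopic : ~ telescopic S456 g456.
Proof.
case=> tau [tau_spec Ap_box].
have [[lam E] Hmin] := tau_spec 1 isT.
have : tau 1 < 4 by apply: Hmin => //; exists (fun _ => 5); rewrite big_ord_recl big_ord0.
move: E; rewrite big_ord_recl big_ord0 /= => E Hlt.
have tau1 : tau 1 = 3 by lia.
have : Ap S456 g456 (3 * 5) by apply/Ap_box/box456E; exists 3, 0; rewrite tau1.
by rewrite Ap456E => -[l1 [l2 [H1 H2 E2]]]; lia.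
Qed.

Theorem mainTheorem7 :
  (forall (S : nat -> Prop) (g : seq nat),
      numerical_semigroup S -> min_gens S g ->
      telescopic S g -> beta_rectangular S g) /\
  (let S := gen [:: 4; 5; 6] in
   [/\ numerical_semigroup S, min_gens S [:: 4; 5; 6],
       alpha_rectangular S [:: 4; 5; 6], beta_rectangular S [:: 4; 5; 6]
     & ~ telescopic S [:: 4; 5; 6]]).
Proof.
split; first exact: telescopic_beta_rectangular.
split.
- exact: S456_numerical.
- exact: S456_min_gens.
- exact: S456_alpha_rectangular.
- exact: S456_beta_rectangular.
- exact: S456_not_telescopic.
Qed.
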